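(* For all integers $i,N,n$ with $0\le i\le N\le n$, $$\sum_{i_1,i_2}\binom{n-i_2}{N-i_2}\binom{n-i_1}{i_2-i}\binom{N-i}{i_1-i}(-1)^{i_1+i_2}=(-1)^{N-i},$$ where the sum is over all integers $i_1,i_2$.
   Context: Convention: the binomial coefficient $\binom{k}{l}$ is defined as the usual binomial coefficient when $k\ge0$, $l\ge0$ and $k\ge l$, and is $0$ otherwise. Because of this convention, the sum above has only finitely many nonzero terms. *)

From mathcomp Require Import all_boot all_order all_algebra.
Set Implicit Arguments. Unset Strict Implicit. Unset Printing Implicit Defensive.
Import Order.TTheory GRing.Theory Num.Theory.
Local Open Scope ring_scope.

Definition binz (k l : int) : int :=
  if (0 <= l) && (l <= k) then ('C(absz k, absz l))%:Z else 0.

Definition termz (n N i i1 i2 : int) : int :=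
  binz (n - i2) (N - i2) * binz (n - i1) (i2 - i) * binz (N - i) (i1 - i)
  * (-1) ^+ absz (i1 + i2).

Definition boxsum (M : nat) (f : int -> int -> int) : int :=
  \sum_(a < (2 * M).+1) \sum_(b < (2 * M).+1)
     f (a%:Z - M%:Z) (b%:Z - M%:Z).

From mathcomp Require Import all_boot all_order all_algebra.
From mathcomp Require Import zify ring.
Import Order.TTheory GRing.Theory Num.Theory.
Local Open Scope ring_scope.

(* Substituting i1 = i + a, i2 = i + b, K = N - i and m = n - i, the summand
   vanishes unless 0 <= a, b <= K, and the sum becomes
     \sum_b (-1)^b C(m-b, K-b) \sum_a (-1)^a C(K, a) C(m-a, b).
   The inner sum is a K-th finite difference of m |-> C(m, b), equal to
   C(m-K, b-K), hence zero for b < K; only b = K survives, contributing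
   (-1)^K. *)

Section AlternatingBinomial.

Variable R : comPzRingType.

Definition alt_binom_sum (K m b : nat) : R :=
  \sum_(a < K.+1) (-1) ^+ a * 'C(K, a)%:R * 'C(m - a, b)%:R.

Lemma alt_binom_sumS (K m b : nat) :
  alt_binom_sum K.+1 m.+1 b = alt_binom_sum K m.+1 b - alt_binom_sum K m b.
Proof.
have pascal (a : nat) : (-1) ^+ a.+1 * 'C(K.+1, a.+1)%:R * 'C(m.+1 - a.+1, b)%:R
  = (-1) ^+ a.+1 * 'C(K, a.+1)%:R * 'C(m.+1 - a.+1, b)%:R
    - (-1) ^+ a * 'C(K, a)%:R * 'C(m - a, b)%:R :> R.
  by rewrite binS natrD subSS exprS; ring.
rewrite /alt_binom_sum big_ord_recl [in RHS]big_ord_recl.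
under eq_bigr => a _ do rewrite /bump /= pascal.
rewrite big_split sumrN big_ord_recr /= (bin_small (ltnSn K)) mulr0 mul0r addr0.
by rewrite !bin0 addrA.
Qed.

Lemma alt_binom_sumE (K m b : nat) : (K <= m)%N ->
  alt_binom_sum K m b = if (K <= b)%N then 'C(m - K, b - K)%:R else 0.
Proof.
elim: K m b => [|K IH] m b hKm.
  by rewrite /alt_binom_sum big_ord1 expr0 bin0 !mul1r !subn0.
case: m hKm => [//|m]; rewrite ltnS => hKm.
rewrite alt_binom_sumS !IH //; last exact: leqW.
case: (ltngtP K b) => [|_|->]; last by rewrite subnn !bin0 subrr.
- case: b => // b; rewrite ltnS => hKb.
  by rewrite subSS (subSn hKm) (subSn hKb) binS natrD; ring.
- by rewrite subrr.
Qed.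

Lemma alt_binom_double_sum (K m : nat) : (K <= m)%N ->
  \sum_(a < K.+1) \sum_(b < K.+1)
    'C(m - b, K - b)%:R * 'C(m - a, b)%:R * 'C(K, a)%:R * (-1) ^+ (a + b)
  = (-1) ^+ K :> R.
Proof.
move=> hKm; rewrite exchange_big /=.
have inner (b : 'I_K.+1) : \sum_(a < K.+1)
    'C(m - b, K - b)%:R * 'C(m - a, b)%:R * 'C(K, a)%:R * (-1) ^+ (a + b)
  = 'C(m - b, K - b)%:R * (-1) ^+ b * alt_binom_sum K m b :> R.
  rewrite mulr_sumr; apply: eq_bigr => a _; rewrite exprD; ring.
under eq_bigr => b _ do rewrite inner alt_binom_sumE //.
rewrite big_ord_recr /= leqnn subnn !bin0 mulr1 mul1r big1 ?add0r // => b _.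
by rewrite leqNgt ltn_ord mulr0.
Qed.

End AlternatingBinomial.

Lemma sum_centered_window (M : nat) (lo hi : int) (f : int -> int) :
  - M%:Z <= lo -> lo <= hi -> hi <= M%:Z ->
  (forall x, x < lo \/ hi < x -> f x = 0) ->
  \sum_(a < (2 * M).+1) f (a%:Z - M%:Z)
  = \sum_(a < (absz (hi - lo)).+1) f (lo + a%:Z).
Proof.
move=> hMlo hlohi hhiM f_out.
set L := absz (lo + M%:Z); set K := absz (hi - lo).
have hL : (L <= L + K.+1)%N by lia.
have hK : (L + K.+1 <= (2 * M).+1)%N by lia.
rewrite -(big_mkord xpredT (fun a : nat => f (a%:Z - M%:Z))).
rewrite (big_cat_nat (leq0n L) (leq_trans hL hK)) (big_cat_nat hL hK) /=.
have below : \sum_(0 <= a < L) f (a%:Z - M%:Z) = 0.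
  by rewrite big_nat_cond big1 // => a /andP[/andP[_ ha] _]; apply: f_out; left; lia.
have above : \sum_(L + K.+1 <= a < (2 * M).+1) f (a%:Z - M%:Z) = 0.
  by rewrite big_nat_cond big1 // => a /andP[/andP[ha _] _]; apply: f_out; right; lia.
rewrite below above add0r addr0 -{1}(add0n L) big_addn.
rewrite (_ : L + K.+1 - L = K.+1)%N ?big_mkord; last by lia.
by apply: eq_bigr => a _; congr f; lia.
Qed.

Lemma boxsum_window (M : nat) (lo hi : int) (f : int -> int -> int) :
  - M%:Z <= lo -> lo <= hi -> hi <= M%:Z ->
  (forall x y, [\/ x < lo, hi < x, y < lo | hi < y] -> f x y = 0) ->
  boxsum M f = \sum_(a < (absz (hi - lo)).+1) \sum_(b < (absz (hi - lo)).+1)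
                 f (lo + a%:Z) (lo + b%:Z).
Proof.
move=> hMlo hlohi hhiM f_out; rewrite /boxsum.
have window g := @sum_centered_window M lo hi g hMlo hlohi hhiM.
under eq_bigr => a _.
  rewrite window => [|y [hy|hy]]; last 2 first.
  - exact/f_out/Or43.
  - exact/f_out/Or44.
  over.
rewrite (window (fun x => \sum_(b < (absz (hi - lo)).+1) f x (lo + b%:Z))) //.
move=> x [hx|hx]; apply: big1 => b _.
- exact/f_out/Or41.
- exact/f_out/Or42.
Qed.

Lemma binz_nat (p q : nat) : binz p%:Z q%:Z = 'C(p, q)%:Z.
Proof.
rewrite /binz lez_nat; case: (leqP q p) => //= hpq.
by rewrite bin_small.
Qed.

Lemma binz_lt0 (p q : int) : q < 0 -> binz p q = 0.
Proof. by rewrite /binz ltNge => /negbTE ->. Qed.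

Lemma binz_gt (p q : int) : p < q -> binz p q = 0.
Proof. by rewrite /binz ltNge => /negbTE ->; rewrite andbF. Qed.

Lemma termz_out (n N i x y : int) :
  [\/ x < i, N < x, y < i | N < y] -> termz n N i x y = 0.
Proof.
rewrite /termz => -[h|h|h|h].
- by rewrite [binz (N - i) _]binz_lt0 ?mulr0 ?mul0r //; lia.
- by rewrite [binz (N - i) _]binz_gt ?mulr0 ?mul0r //; lia.
- by rewrite [binz (n - x) _]binz_lt0 ?mulr0 ?mul0r //; lia.
- by rewrite [binz (n - y) _]binz_lt0 ?mulr0 ?mul0r //; lia.
Qed.

Lemma termz_shift (n N i : int) (K m a b : nat) :
  0 <= i -> N - i = K%:Z -> n - i = m%:Z -> (K <= m)%N ->
  (a <= K)%N -> (b <= K)%N ->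
  termz n N i (i + a%:Z) (i + b%:Z) =
    'C(m - b, K - b)%:R * 'C(m - a, b)%:R * 'C(K, a)%:R * (-1) ^+ (a + b).
Proof.
move=> hi hK hm hKm ha hb; rewrite /termz !natz hK.
have -> : n - (i + b%:Z) = (m - b)%N%:Z by lia.
have -> : N - (i + b%:Z) = (K - b)%N%:Z by lia.
have -> : n - (i + a%:Z) = (m - a)%N%:Z by lia.
have -> : i + a%:Z - i = a%:Z by lia.
have -> : i + b%:Z - i = b%:Z by lia.
have -> : absz (i + a%:Z + (i + b%:Z)) = (a + b + 2 * absz i)%N by lia.
by rewrite !binz_nat exprD exprM sqrrN expr1n mulr1.
Qed.

Theorem mainTheorem2 (i N n : int) :
  0 <= i -> i <= N -> N <= n ->
  exists M0 : nat, forall M : nat, (M0 <= M)%N ->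
    boxsum M (termz n N i) = (-1) ^+ absz (N - i).
Proof.
move=> hi hiN hNn; exists (absz N) => M hM.
set K := absz (N - i); set m := absz (n - i).
have hK : N - i = K%:Z by lia.
have hm : n - i = m%:Z by lia.
have hKm : (K <= m)%N by lia.
rewrite (@boxsum_window M i N); [|lia..|exact: termz_out].
under eq_bigr => a _ do under eq_bigr => b _ do
  rewrite (@termz_shift n N i K m a b hi hK hm hKm (leq_ord a) (leq_ord b)).
exact: alt_binom_double_sum.
Qed.
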